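(* Let $$D_6=\begin{bmatrix}1&1&1&1&1&1\\1&-1&\mathrm{i}&-\mathrm{i}&-\mathrm{i}&\mathrm{i}\\1&\mathrm{i}&-1&\mathrm{i}&-\mathrm{i}&-\mathrm{i}\\1&-\mathrm{i}&\mathrm{i}&-1&\mathrm{i}&-\mathrm{i}\\1&-\mathrm{i}&-\mathrm{i}&\mathrm{i}&-1&\mathrm{i}\\1&\mathrm{i}&-\mathrm{i}&-\mathrm{i}&\mathrm{i}&-1\end{bmatrix},$$ and for $c\in\mathbb{R}$ let $R(c)\in M^{6\times 6}(\mathbb{R})$ be the matrix with $[R(c)]_{3,4}=[R(c)]_{3,5}=[R(c)]_{6,4}=[R(c)]_{6,5}=c$, $[R(c)]_{4,3}=[R(c)]_{4,6}=[R(c)]_{5,3}=[R(c)]_{5,6}=-c$, and all other entries $0$. Let $D_6^{(1)}(c)=D_6\circ \mathrm{EXP}(\mathrm{i}R(c))$, which is a complex Hadamard matrix for every $c\in\mathbb{R}$. Then $d\big(D_6^{(1)}(c)\big)=4$ for every $c\in\mathbb{R}$.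
   Context: $\circ$ denotes the entrywise (Hadamard) product and $[\mathrm{EXP}(\mathrm{i}R)]_{j,k}=e^{\mathrm{i}[R]_{j,k}}$. A complex Hadamard matrix of order $d$ is $H\in M^{d\times d}(\mathbb{C})$ with all entries of modulus $1$ and $HH^*=dI_d$. The defect $d(H)$ of a $d\times d$ complex Hadamard matrix $H$ is the dimension of the real vector space of matrices $R\in M^{d\times d}(\mathbb{R})$ satisfying: $[R]_{i,1}=0$ for $1\le i\le d$; $[R]_{1,j}=0$ for $2\le j\le d$; and $\sum_{k=1}^d [H]_{i,k}\overline{[H]_{j,k}}\big([R]_{i,k}-[R]_{j,k}\big)=0$ for all $1\le i<j\le d$. *)

From HB Require Import structures.
From mathcomp Require Import all_boot all_order all_algebra.
From mathcomp Require Import reals trigo.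
From mathcomp Require Import complex.
Set Implicit Arguments. Unset Strict Implicit. Unset Printing Implicit Defensive.
Import Order.TTheory GRing.Theory Num.Theory.
Local Open Scope ring_scope.
Local Open Scope complex_scope.

Section Defs.
Variable R : realType.
Local Notation C := R[i].

Definition expi (x : R) : C := (cos x) +i* (sin x).

Definition hadamard_exp (d : nat) (H : 'M[C]_d) (X : 'M[R]_d) : 'M[C]_d :=
  \matrix_(j, k) (H j k * expi (X j k)).

Definition complex_hadamard (d : nat) (H : 'M[C]_d) : Prop :=
  (forall j k, `|H j k| = 1) /\ H *m (map_mx Num.conj H)^T = (d%:R)%:M.

(* The defining conditions of the defect space (indices 0-based:
   paper's index 1 is ord 0). *)
Definition defect_cond (d : nat) (H : 'M[C]_d) (X : 'M[R]_d) : Prop :=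
  (forall i k : 'I_d, nat_of_ord k = 0%N -> X i k = 0) /\
  (forall i j : 'I_d, nat_of_ord i = 0%N -> (1 <= j)%N -> X i j = 0) /\
  (forall i j : 'I_d, (i < j)%N ->
     \sum_(k < d) H i k * Num.conj (H j k) * ((X i k - X j k)%:C) = 0).

(* d(H) = n : the real vector space of solutions has dimension n,
   i.e. it has a basis (free spanning family) of n matrices. *)
Definition has_defect (d : nat) (H : 'M[C]_d) (n : nat) : Prop :=
  exists b : n.-tuple 'M[R]_d,
    free b /\ (forall X : 'M[R]_d, defect_cond H X <-> X \in <<b>>%VS).

Definition D6_list : seq (seq C) :=
  [:: [:: 1; 1; 1; 1; 1; 1];
      [:: 1; -1; 'i; -'i; -'i; 'i];
      [:: 1; 'i; -1; 'i; -'i; -'i];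
      [:: 1; -'i; 'i; -1; 'i; -'i];
      [:: 1; -'i; -'i; 'i; -1; 'i];
      [:: 1; 'i; -'i; -'i; 'i; -1]].

Definition D6 : 'M[C]_6 :=
  \matrix_(j, k) nth 0 (nth [::] D6_list j) k.

(* R(c), with 0-based indices: paper's (3,4) is (2,3), etc. *)
Definition Rc_list (c : R) : seq (seq R) :=
  [:: [:: 0; 0; 0; 0; 0; 0];
      [:: 0; 0; 0; 0; 0; 0];
      [:: 0; 0; 0; c; c; 0];
      [:: 0; 0; -c; 0; 0; -c];
      [:: 0; 0; -c; 0; 0; -c];
      [:: 0; 0; 0; c; c; 0]].

Definition Rc (c : R) : 'M[R]_6 :=
  \matrix_(j, k) nth 0 (nth [::] (Rc_list c) j) k.

Definition D6_1 (c : R) : 'M[C]_6 := hadamard_exp D6 (Rc c).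

End Defs.

(* Indices start at 0, as in the definitions.  The defect conditions are linear
   in R and, once the first row and column of R vanish, the condition for rows
   (i, j) splits into two real equations whose coefficients, the real and
   imaginary parts of [D6_1]_ik conj [D6_1]_jk, lie in {0, ±1, ±cos c, ±sin c}.
   Four solutions are exhibited: R(1), tangent to the family, and three others
   whose entries at the pivots (2,3), (2,4), (5,3), (5,4) make the pivot map
   invertible.  It remains to see that a solution vanishing at the pivots is 0.
   The pairs (0,1), (0,2), (0,5), (2,5) kill the entry (1,1) and rows 2 and 5.
   For row 3 (and likewise row 4), multiplying its complex conditions against
   rows 2 and 5 by e^(-ic) and e^(ic) expresses the differences of its entries
   through its first entry R_31; the conditions against row 0 then give
   (3 + sin c - cos c) R_31 = 0, and the factor is positive.  Last, the real
   conditions of row 1 against rows 2..5 force (1 + 4 cos^2 c) (R_13 - R_14) = 0,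
   and then row 1 vanishes. *)

From mathcomp Require Import all_boot all_order all_algebra.
From mathcomp Require Import reals trigo complex.
From mathcomp Require Import ring lra.
Set Implicit Arguments. Unset Strict Implicit. Unset Printing Implicit Defensive.
Import Order.TTheory GRing.Theory Num.Theory.
Local Open Scope ring_scope.
Local Open Scope complex_scope.

Section DefectSpace.
Variables (R : realType) (d : nat) (H : 'M[R[i]]_d).

Lemma defect_cond0 : defect_cond H 0.
Proof.
split=> [i k _|]; first by rewrite mxE.
split=> [i j _ _|i j _]; first by rewrite mxE.
by rewrite big1 // => k _; rewrite !mxE subrr mulr0.
Qed.

Lemma defect_cond_lin (X Y : 'M[R]_d) (a : R) :
  defect_cond H X -> defect_cond H Y -> defect_cond H (a *: X + Y).
Proof.
move=> [X1 [X2 X3]] [Y1 [Y2 Y3]]; split=> [i k k0|].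
  by rewrite !mxE X1 // Y1 // mulr0 addr0.
split=> [i j i0 j1|i j ij]; first by rewrite !mxE X2 // Y2 // mulr0 addr0.
have -> : \sum_(k < d) H i k * Num.conj (H j k) * ((a *: X + Y) i k - (a *: X + Y) j k)%:C
  = a%:C * \sum_(k < d) H i k * Num.conj (H j k) * (X i k - X j k)%:C
    + \sum_(k < d) H i k * Num.conj (H j k) * (Y i k - Y j k)%:C.
  rewrite mulr_sumr -big_split; apply: eq_bigr => k _ /=.
  by rewrite !mxE !raddfB !raddfD /= !rmorphM; ring.
by rewrite X3 // Y3 // mulr0 addr0.
Qed.

Lemma defect_cond_span n (b : n.-tuple 'M[R]_d) (X : 'M[R]_d) :
  (forall i : 'I_n, defect_cond H b`_i) -> X \in <<b>>%VS -> defect_cond H X.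
Proof.
move=> hb /coord_span ->; elim/big_ind: _ => [|Y Z hY hZ|i _].
- exact: defect_cond0.
- by have := defect_cond_lin 1 hY hZ; rewrite scale1r.
- by have := defect_cond_lin (coord b i X) (hb i) defect_cond0; rewrite addr0.
Qed.

Lemma has_defect_basis n (b : n.-tuple 'M[R]_d) :
  free b -> (forall i : 'I_n, defect_cond H b`_i) ->
  (forall X, defect_cond H X -> X \in <<b>>%VS) -> has_defect H n.
Proof.
move=> free_b hb span_b; exists b; split=> // X.
by split=> [/span_b | /defect_cond_span]; last exact.
Qed.

End DefectSpace.

Lemma complexJ (R : rcfType) (z : R[i]) : z^* = Num.conj z.
Proof.
case: z => a b; have -> : a +i* b = a%:C + 'i%R * b%:C by simpc.
by rewrite conjC_rect ?complex_real // -complexiE; simpc.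
Qed.

Lemma sum_mul_real_eq0 (R : rcfType) n (z : 'I_n -> R[i]) (r : 'I_n -> R) :
  \sum_(k < n) z k * (r k)%:C = 0 <->
  \sum_(k < n) complex.Re (z k) * r k = 0 /\ \sum_(k < n) complex.Im (z k) * r k = 0.
Proof.
have -> : \sum_(k < n) z k * (r k)%:C =
   (\sum_(k < n) complex.Re (z k) * r k) +i* (\sum_(k < n) complex.Im (z k) * r k).
  elim/big_ind3: _ => [//|? ? ? ? ? ? -> ->//|k _].
  by case: (z k) => a b /=; simpc.
by split=> [[-> ->] | [-> ->]].
Qed.

Lemma expi_mul_conj (R : realType) (a b : R) : expi a * Num.conj (expi b) = expi (a - b).
Proof. by rewrite -complexJ /expi /= cosB sinB; simpc; congr (_ +i* _); ring. Qed.

Lemma hadamard_exp_mul_conj (R : realType) d (H : 'M[R[i]]_d) X i j k :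
  hadamard_exp H X i k * Num.conj (hadamard_exp H X j k) =
  H i k * Num.conj (H j k) * expi (X i k - X j k).
Proof. by rewrite !mxE rmorphM -expi_mul_conj; ring. Qed.

Lemma hadamard_exp_pairE (R : realType) d (H : 'M[R[i]]_d) (X Y : 'M[R]_d) i j :
  \sum_(k < d) hadamard_exp H X i k * Num.conj (hadamard_exp H X j k) * (Y i k - Y j k)%:C = 0 <->
  \sum_(k < d) complex.Re (H i k * Num.conj (H j k) * expi (X i k - X j k)) * (Y i k - Y j k) = 0 /\
  \sum_(k < d) complex.Im (H i k * Num.conj (H j k) * expi (X i k - X j k)) * (Y i k - Y j k) = 0.
Proof. by under eq_bigr do rewrite hadamard_exp_mul_conj; exact: sum_mul_real_eq0. Qed.

Section UnitCircle.
Variables (R : realFieldType) (u v : R).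
Hypothesis uv1 : u ^+ 2 + v ^+ 2 = 1.

Lemma circle_rotate_eq0 (a s t : R) :
  a + v * s + u * t = 0 -> v * t - u * s = 0 -> s = - (v * a) /\ t = - (u * a).
Proof.
move=> E1 E2; split.
  have -> : s = v * (a + v * s + u * t) - u * (v * t - u * s) - v * a
                + (1 - (u ^+ 2 + v ^+ 2)) * s by ring.
  by rewrite E1 E2 uv1; ring.
have -> : t = u * (a + v * s + u * t) + v * (v * t - u * s) - u * a
              + (1 - (u ^+ 2 + v ^+ 2)) * t by ring.
by rewrite E1 E2 uv1; ring.
Qed.

Lemma circle_system_eq0 (a1 a2 a3 a4 a5 : R) :
  - v * a2 + a3 + v * a5 = 0 ->
  - a1 + u * a2 + a4 - u * a5 = 0 ->
  a1 + v * a2 - v * a3 + u * a4 - u * a5 = 0 ->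
  - u * a2 + u * a3 + v * a4 - v * a5 = 0 ->
  - a1 - u * a2 - v * a3 + u * a4 + v * a5 = 0 ->
  v * a2 - u * a3 - v * a4 + u * a5 = 0 ->
  [/\ a1 = 0, a2 = 0, a3 = 0, a4 = 0 & a5 = 0].
Proof.
have pos : 0 < 3 + v - u.
  by have := sqr_ge0 (u - 1); have := sqr_ge0 (v + 1); have := uv1; lra.
move=> E1 E2 E3 E4 E5 E6.
have [e23 e45] : a2 - a3 = - (v * a1) /\ a4 - a5 = - (u * a1).
  by apply: circle_rotate_eq0; lra.
have [e35 e24] : a3 - a5 = - (v * a1) /\ a2 - a4 = - (u * a1).
  by apply: circle_rotate_eq0; lra.
have e1 : a3 - v * (a2 - a5) = 0 by lra.
have e2 : a4 - a1 + u * (a2 - a5) = 0 by lra.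
rewrite (_ : a2 - a5 = -2 * v * a1) in e1; last by lra.
rewrite (_ : a2 - a5 = -2 * u * a1) in e2; last by lra.
have a1u : (u ^+ 2 + v ^+ 2) * a1 = a1 by rewrite uv1 mul1r.
have /eqP : (3 + v - u) * a1 = 0 by lra.
rewrite mulf_eq0 gt_eqF //= => /eqP a1_0.
rewrite a1_0 in e1 e23 e45 e35 e24; split; lra.
Qed.

End UnitCircle.

Lemma param_system_eq0 (R : realFieldType) (u b2 b3 b4 b5 : R) :
  u * (b4 - b3) - b5 = 0 -> u * (b3 - b4) - b2 = 0 ->
  u * (b2 - b5) - b4 = 0 -> u * (b5 - b2) - b3 = 0 ->
  [/\ b2 = 0, b3 = 0, b4 = 0 & b5 = 0].
Proof.
move=> E1 E2 E3 E4.
have e25 : b2 - b5 = 2 * u * (b3 - b4) by lra.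
have e34 : b3 - b4 = - (2 * u) * (b2 - b5) by lra.
rewrite e25 in e34.
have pos : 0 < 1 + 4 * u ^+ 2 by nra.
have /eqP : (1 + 4 * u ^+ 2) * (b3 - b4) = 0 by lra.
rewrite mulf_eq0 gt_eqF //= subr_eq0 => /eqP b34.
rewrite b34 subrr mulr0 in e25; rewrite b34 in E1 E3; split; lra.
Qed.

Lemma sum_ord4 (V : nmodType) (F : 'I_4 -> V) :
  \sum_(i < 4) F i = F (inord 0) + F (inord 1) + F (inord 2) + F (inord 3).
Proof.
rewrite !big_ord_recl big_ord0 addr0 !addrA.
by repeat congr (_ + _); congr F; apply/val_inj; rewrite /= inordK.
Qed.

Definition mx6 (R : nmodType) (s : seq (seq R)) : 'M[R]_6 :=
  \matrix_(i, j) nth 0 (nth [::] s i) j.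

Lemma mx6E (R : nmodType) (s : seq (seq R)) (i k : nat) : (i < 6)%N -> (k < 6)%N ->
  mx6 s (inord i) (inord k) = nth 0 (nth [::] s i) k.
Proof. by move=> i6 k6; rewrite mxE !inordK. Qed.

Section D6_1.
Variables (R : realType) (c : R).
Local Notation u := (cos c).
Local Notation v := (sin c).

(* [D6_1 c]_ik * conj [D6_1 c]_jk read off the defining tables, so that it
   evaluates by computation at numeral indices. *)
Definition D6_1_gram (i j k : nat) : R[i] :=
  let h i k := nth 0 (nth [::] (D6_list R) i) k in
  let r i k := nth 0 (nth [::] (Rc_list c) i) k in
  h i k * Num.conj (h j k) * expi (r i k - r j k).

Lemma D6_1_pairE (Y : 'M[R]_6) (i j : nat) : (i < 6)%N -> (j < 6)%N ->
  \sum_(k < 6) D6_1 c (inord i) k * Num.conj (D6_1 c (inord j) k) *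
    (Y (inord i) k - Y (inord j) k)%:C = 0 <->
  \sum_(0 <= k < 6) complex.Re (D6_1_gram i j k) *
    (Y (inord i) (inord k) - Y (inord j) (inord k)) = 0 /\
  \sum_(0 <= k < 6) complex.Im (D6_1_gram i j k) *
    (Y (inord i) (inord k) - Y (inord j) (inord k)) = 0.
Proof.
move=> i6 j6; rewrite hadamard_exp_pairE !big_mkord.
have gramE (k : 'I_6) : D6 R (inord i) k * Num.conj (D6 R (inord j) k) *
    expi (Rc c (inord i) k - Rc c (inord j) k) = D6_1_gram i j k.
  by rewrite /D6 /Rc /D6_1_gram !mxE !inordK.
have sumE (f : R[i] -> R) :
  \sum_(k < 6) f (D6 R (inord i) k * Num.conj (D6 R (inord j) k) *
    expi (Rc c (inord i) k - Rc c (inord j) k)) * (Y (inord i) k - Y (inord j) k) =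
  \sum_(k < 6) f (D6_1_gram i j k) * (Y (inord i) (inord k) - Y (inord j) (inord k)).
  by apply: eq_bigr => k _; rewrite gramE inord_val.
by rewrite !sumE.
Qed.

Ltac gram_simpl :=
  rewrite unlock /D6_1_gram /= ?subr0 ?sub0r ?opprK ?subrr ?addNr ?cos0 ?sin0 ?cosN ?sinN.

Section PivotFree.
Variable Y : 'M[R]_6.
Hypothesis hY : defect_cond (D6_1 c) Y.
Local Notation y i j := (Y (inord i) (inord j)).
Hypotheses (Y23 : y 2 3 = 0) (Y24 : y 2 4 = 0) (Y53 : y 5 3 = 0) (Y54 : y 5 4 = 0).

Lemma defect_col0 (i : 'I_6) : Y i (inord 0) = 0.
Proof. by case: hY => -> //; rewrite inordK. Qed.

Lemma defect_row0 (k : 'I_6) : Y (inord 0) k = 0.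
Proof.
case: k => [[|k] hk]; last by case: hY => _ [-> //]; rewrite inordK.
by rewrite (_ : Ordinal hk = inord 0) ?defect_col0 //; apply/val_inj; rewrite /= inordK.
Qed.

Lemma defect_pair (i j : nat) : (i < j < 6)%N ->
  \sum_(0 <= k < 6) complex.Re (D6_1_gram i j k) * (y i k - y j k) = 0 /\
  \sum_(0 <= k < 6) complex.Im (D6_1_gram i j k) * (y i k - y j k) = 0.
Proof.
case/andP=> ij j6; have i6 := ltn_trans ij j6.
by apply/D6_1_pairE => //; case: hY => _ [_]; apply; rewrite !inordK.
Qed.

Ltac defect_simpl := gram_simpl; rewrite ?defect_col0 ?defect_row0 ?Y23 ?Y24 ?Y53 ?Y54.

Lemma defect_diag_eq0 : [/\ y 1 1 = 0, y 2 2 = 0 & y 5 5 = 0].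
Proof.
have [r01 _] := @defect_pair 0 1 isT; have [r02 _] := @defect_pair 0 2 isT.
have [r05 _] := @defect_pair 0 5 isT.
move: r01 r02 r05; defect_simpl => r01 r02 r05; split; lra.
Qed.

Lemma defect_rows25_eq0 : [/\ y 2 1 = 0, y 2 5 = 0, y 5 1 = 0 & y 5 2 = 0].
Proof.
have [_ z22 z55] := defect_diag_eq0.
have [_ i02] := @defect_pair 0 2 isT; have [_ i05] := @defect_pair 0 5 isT.
have [r25 i25] := @defect_pair 2 5 isT.
move: i02 i05 r25 i25; defect_simpl; rewrite z22 z55 => i02 i05 r25 i25; split; lra.
Qed.

Lemma defect_row3_eq0 : [/\ y 3 1 = 0, y 3 2 = 0, y 3 3 = 0, y 3 4 = 0 & y 3 5 = 0].
Proof.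
have [z21 z25 z51 z52] := defect_rows25_eq0; have [_ z22 z55] := defect_diag_eq0.
have [r03 i03] := @defect_pair 0 3 isT; have [r23 i23] := @defect_pair 2 3 isT.
have [r35 i35] := @defect_pair 3 5 isT.
move: r03 i03 r23 i23 r35 i35; defect_simpl; rewrite z21 z22 z25 z51 z52 z55.
move=> r03 i03 r23 i23 r35 i35; apply: (circle_system_eq0 (cos2Dsin2 c));
  [move: r03 | move: i03 | move: r23 | move: i23 | move: r35 | move: i35]; move=> <-; ring.
Qed.

Lemma defect_row4_eq0 : [/\ y 4 1 = 0, y 4 2 = 0, y 4 3 = 0, y 4 4 = 0 & y 4 5 = 0].
Proof.
have [z21 z25 z51 z52] := defect_rows25_eq0; have [_ z22 z55] := defect_diag_eq0.
have [r04 i04] := @defect_pair 0 4 isT; have [r24 i24] := @defect_pair 2 4 isT.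
have [r45 i45] := @defect_pair 4 5 isT.
move: r04 i04 r24 i24 r45 i45; defect_simpl; rewrite z21 z22 z25 z51 z52 z55.
move=> r04 i04 r24 i24 r45 i45.
(* Row 4 solves the system of row 3 at the point (-u, -v), columns 3 and 4 swapped. *)
have uv1 : (- u) ^+ 2 + (- v) ^+ 2 = 1 by rewrite !sqrrN cos2Dsin2.
suff [? ? ? ? ?] : [/\ y 4 1 = 0, y 4 2 = 0, y 4 4 = 0, y 4 3 = 0 & y 4 5 = 0] by [].
apply: (circle_system_eq0 uv1);
  [move: r04 | move: i04 | move: r24 | move: i24 | move: r45 | move: i45]; move=> <-; ring.
Qed.

Lemma defect_row1_eq0 : [/\ y 1 2 = 0, y 1 3 = 0, y 1 4 = 0 & y 1 5 = 0].
Proof.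
have [z21 z25 z51 z52] := defect_rows25_eq0; have [z11 z22 z55] := defect_diag_eq0.
have [z31 z32 z33 z34 z35] := defect_row3_eq0; have [z41 z42 z43 z44 z45] := defect_row4_eq0.
have [r12 _] := @defect_pair 1 2 isT; have [r13 _] := @defect_pair 1 3 isT.
have [r14 _] := @defect_pair 1 4 isT; have [r15 _] := @defect_pair 1 5 isT.
move: r12 r13 r14 r15; defect_simpl; rewrite z11 z21 z22 z25 z51 z52 z55.
rewrite z31 z32 z33 z34 z35 z41 z42 z43 z44 z45 => r12 r13 r14 r15.
apply: (param_system_eq0 (u := u)); [move: r12 | move: r15 | move: r13 | move: r14];
  move=> <-; ring.
Qed.

Lemma defect_pivot_free_eq0 : Y = 0.
Proof.
have [z11 z22 z55] := defect_diag_eq0; have [z21 z25 z51 z52] := defect_rows25_eq0.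
have [z31 z32 z33 z34 z35] := defect_row3_eq0; have [z41 z42 z43 z44 z45] := defect_row4_eq0.
have [z12 z13 z14 z15] := defect_row1_eq0.
apply/matrixP => i j; rewrite mxE -(inord_val i) -(inord_val j).
by case: i j => [[|[|[|[|[|[|?]]]]]] ?] [[|[|[|[|[|[|?]]]]]] ?]; rewrite ?defect_col0 ?defect_row0.
Qed.

End PivotFree.

Lemma D6_1_defect_cond_mx6 (s : seq (seq R)) :
  (forall i : 'I_6, nth 0 (nth [::] s i) 0 = 0) ->
  (forall k : 'I_6, nth 0 (nth [::] s 0) k = 0) ->
  (forall i j : 'I_6, (i < j)%N ->
    \sum_(0 <= k < 6) complex.Re (D6_1_gram i j k) *
      (nth 0 (nth [::] s i) k - nth 0 (nth [::] s j) k) = 0 /\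
    \sum_(0 <= k < 6) complex.Im (D6_1_gram i j k) *
      (nth 0 (nth [::] s i) k - nth 0 (nth [::] s j) k) = 0) ->
  defect_cond (D6_1 c) (mx6 s).
Proof.
move=> col0 row0 pairs; split=> [i k k0|]; first by rewrite mxE k0 col0.
split=> [i j i0 _|i j ij]; first by rewrite mxE i0 row0.
rewrite -(inord_val i) -(inord_val j) D6_1_pairE //.
have [Er Ei] := pairs i j ij.
by split; [apply: etrans Er | apply: etrans Ei]; apply: eq_big_nat => k /= k6; rewrite !mx6E.
Qed.

(* [Rc 1] is the tangent to the family [c |-> Rc c]. *)
Definition D6_1_basis : 4.-tuple 'M[R]_6 := [tuple Rc 1;
  mx6 [:: [:: 0; 0; 0; 0; 0; 0]; [:: 0; 0; -1; 0; 0; 1]; [:: 0; 1; 0; 1; 1; 1];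
          [:: 0; 0; -1; - v; u; 0]; [:: 0; 0; -1; - u; v; 0]; [:: 0; -1; -1; 0; 0; 0]];
  mx6 [:: [:: 0; 0; 0; 0; 0; 0]; [:: 0; 0; 0; 1; -1; 0]; [:: 0; 0; - v; 1; 0; u];
          [:: 0; -1; -1; 0; -1; -1]; [:: 0; 1; 0; 1; 0; 0]; [:: 0; 0; - u; 1; 0; v]];
  mx6 [:: [:: 0; 0; 0; 0; 0; 0]; [:: 0; 0; u - v; u - v; u - v; u - v];
          [:: 0; - (u + v); - v; 1; 0; - v]; [:: 0; - (u + v); - (1 + 2 * v); - v; - v; - 2 * v];
          [:: 0; - (u + v); - 2 * v; - v; - v; - (1 + 2 * v)]; [:: 0; - (u + v); - v; 0; 1; - v]]].

Lemma D6_1_basis_cond : forall i : 'I_4, defect_cond (D6_1 c) D6_1_basis`_i.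
Proof.
case=> [[|[|[|[|?]]]] ?] //=;
  apply: D6_1_defect_cond_mx6 => [[[|[|[|[|[|[|?]]]]]] ?] //|[[|[|[|[|[|[|?]]]]]] ?] //|];
  move=> [[|[|[|[|[|[|?]]]]]] ?] [[|[|[|[|[|[|?]]]]]] ?] //= _;
  gram_simpl; have := cos2Dsin2 c; split; lra.
Qed.

Lemma D6_1_basis_pivots (x : 'I_4 -> R) :
  let B := \sum_(i < 4) x i *: D6_1_basis`_i in
  [/\ B (inord 2) (inord 3) = x (inord 0) + x (inord 1) + x (inord 2) + x (inord 3),
      B (inord 2) (inord 4) = x (inord 0) + x (inord 1),
      B (inord 5) (inord 3) = x (inord 0) + x (inord 2) &
      B (inord 5) (inord 4) = x (inord 0) + x (inord 3)].
Proof. by rewrite /= !summxE !sum_ord4 !mxE !inordK //= /Rc !mx6E //=; split; ring. Qed.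

Lemma D6_1_basis_free : free D6_1_basis.
Proof.
apply/freeP => x x0 i; have [] := D6_1_basis_pivots x; rewrite x0 !mxE.
by rewrite -(inord_val i); case: i => [[|[|[|[|?]]]] ?] //= *; lra.
Qed.

Lemma D6_1_defect_in_span X : defect_cond (D6_1 c) X -> X \in <<D6_1_basis>>%VS.
Proof.
move=> hX; set p := X (inord 2) (inord 3); set q := X (inord 2) (inord 4).
set r := X (inord 5) (inord 3); set s := X (inord 5) (inord 4).
pose a := (q + r + s - p) / 2.
pose x (i : 'I_4) := nth 0 [:: a; q - a; r - a; s - a] i.
set S := \sum_(i < 4) x i *: D6_1_basis`_i.
have S_span : S \in <<D6_1_basis>>%VS.
  by apply: rpred_sum => i _; apply/rpredZ/memv_span/mem_nth; rewrite size_tuple.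
have hXS := defect_cond_lin (-1) (defect_cond_span D6_1_basis_cond S_span) hX.
have [S23 S24 S53 S54] := D6_1_basis_pivots x.
suff : - S + X = 0 by move/eqP; rewrite addrC subr_eq0 => /eqP ->.
rewrite -scaleN1r; apply: (defect_pivot_free_eq0 hXS);
  by rewrite !mxE ?S23 ?S24 ?S53 ?S54 /x !inordK //= -/p -/q -/r -/s /a; lra.
Qed.

End D6_1.

Theorem mainTheorem2 (R : realType) (c : R) : has_defect (D6_1 c) 4.
Proof.
apply: (has_defect_basis (D6_1_basis_free c)); first exact: D6_1_basis_cond.
exact: D6_1_defect_in_span.
Qed.
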